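(* Let $T,S\in\mathcal{B}_A(\mathcal{H})$ be $A$-selfadjoint (i.e. $AT$ and $AS$ are selfadjoint). Then $$\omega_A(T+S)\le\sqrt{\omega_A^2(T+iS)+\omega_A(ST)+\|T\|_A\|S\|_A}\le\omega_A(T)+\omega_A(S).$$
   Context: $\mathcal{H}$ is a complex Hilbert space with inner product $\langle\cdot,\cdot\rangle$, and $A$ is a fixed nonzero positive bounded operator on $\mathcal{H}$. Set $\langle x,y\rangle_A=\langle Ax,y\rangle$ and $\|x\|_A=\|A^{1/2}x\|$. $\mathcal{B}_A(\mathcal{H})$ is the set of bounded operators $T$ for which there exists a bounded $S$ with $\langle Tx,y\rangle_A=\langle x,Sy\rangle_A$ for all $x,y$. For an operator $T$ with $\|Tx\|_A\le\lambda\|x\|_A$ for some $\lambda>0$ and all $x$, $\|T\|_A=\sup\{\|Tx\|_A: \|x\|_A=1\}$, and $\omega_A(T)=\sup\{|\langle Tx,x\rangle_A|:\|x\|_A=1\}$. *)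

From HB Require Import structures.
From mathcomp Require Import all_boot all_order all_algebra.
From mathcomp Require Import complex.
From mathcomp Require Import boolp classical_sets reals.
Set Implicit Arguments.
Unset Strict Implicit.
Unset Printing Implicit Defensive.
Import Order.TTheory GRing.Theory Num.Theory.
Local Open Scope ring_scope.
Local Open Scope classical_set_scope.

Section Hilbert.
Variables (R : realType) (V : lmodType R[i]) (ip : V -> V -> R[i]).

Definition vnorm (x : V) : R := Num.sqrt (complex.Re (ip x x)).

Definition is_hilbert : Prop :=
  [/\ (forall (a : R[i]) (x y z : V), ip (a *: x + y) z = a * ip x z + ip y z),
      (forall x y : V, ip y x = conjc (ip x y)),
      (forall x : V, 0 <= ip x x),
      (forall x : V, ip x x = 0 -> x = 0)
    & (forall u : nat -> V,
        (forall e : R, 0 < e -> exists N : nat, forall m n : nat,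
            (N <= m)%N -> (N <= n)%N -> vnorm (u m - u n) < e) ->
        exists l : V, forall e : R, 0 < e -> exists N : nat, forall n : nat,
            (N <= n)%N -> vnorm (u n - l) < e)].

Definition bounded_op (T : V -> V) : Prop :=
  (forall (a : R[i]) (x y : V), T (a *: x + y) = a *: T x + T y) /\
  exists c : R, forall x : V, vnorm (T x) <= c * vnorm x.

Definition positive_op (A : V -> V) : Prop :=
  bounded_op A /\ forall x : V, 0 <= ip (A x) x.

Definition nonzero_op (A : V -> V) : Prop := exists x : V, A x <> 0.

Variable A : V -> V.

Definition ipA (x y : V) : R[i] := ip (A x) y.

Definition normA (x : V) : R := Num.sqrt (complex.Re (ipA x x)).

Definition in_BA (T : V -> V) : Prop :=
  bounded_op T /\
  exists S : V -> V, bounded_op S /\ forall x y : V, ipA (T x) y = ipA x (S y).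

Definition A_selfadjoint (T : V -> V) : Prop :=
  forall x y : V, ip (A (T x)) y = ip x (A (T y)).

Definition A_sphere : set V := [set x | normA x = 1].

Definition opnormA (T : V -> V) : R :=
  sup [set normA (T x) | x in A_sphere].

Definition numradA (T : V -> V) : R :=
  sup [set ComplexField.Normc.normc (ipA (T x) x) | x in A_sphere].

End Hilbert.

Definition op_add {R : realType} {V : lmodType R[i]} (T S : V -> V) : V -> V :=
  fun x => T x + S x.
Definition op_scale {R : realType} {V : lmodType R[i]} (a : R[i]) (T : V -> V)
  : V -> V := fun x => a *: T x.

From HB Require Import structures.
From mathcomp Require Import all_boot all_order all_algebra.
From mathcomp Require Import complex.
From mathcomp Require Import boolp classical_sets reals.
From mathcomp Require Import ring lra.

(* For an A-unit vector x put t = <Tx, x>_A and s = <Sx, x>_A; both are real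
   because T and S are A-selfadjoint, and |<(T + iS)x, x>_A|^2 = t^2 + s^2.
   Comparing Sx with the reflection 2 t x - Tx of Tx (which has the same
   A-norm) gives the Buzano-type bound
   2ts <= |<Tx, Sx>_A| + ||Tx||_A ||Sx||_A, and <Tx, Sx>_A = <STx, x>_A, so
   (t + s)^2 <= w_A(T + iS)^2 + w_A(ST) + ||T||_A ||S||_A.  For the second
   inequality, w_A(T + iS)^2 <= w_A(T)^2 + w_A(S)^2,
   w_A(ST) <= ||T||_A ||S||_A, and ||B||_A <= w_A(B) for A-selfadjoint B by
   polarization.
   All suprema are finite: for an A-selfadjoint bounded B and an A-unit x,
   ||Bx||_A^(2^n) <= ||B^(2^n) x||_A, and the right-hand side grows at most
   like ||B||^(2^n). *)

Set Implicit Arguments.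
Unset Strict Implicit.
Import Order.TTheory GRing.Theory Num.Theory.
Local Open Scope ring_scope.

Local Notation normc := ComplexField.Normc.normc.
Local Notation Re := (@complex.Re _).
Local Notation Im := (@complex.Im _).

Section ComplexNorm.
Variable R : rcfType.
Implicit Types z : R[i].

Lemma normc_ReIm z : normc z = Num.sqrt (Re z ^+ 2 + Im z ^+ 2).
Proof. by case: z. Qed.

Lemma sqr_normc_ReIm z : normc z ^+ 2 = Re z ^+ 2 + Im z ^+ 2.
Proof. by rewrite normc_ReIm sqr_sqrtr ?addr_ge0 ?sqr_ge0. Qed.

Lemma normc_ge0 z : 0 <= normc z.
Proof. by rewrite normc_ReIm sqrtr_ge0. Qed.

Lemma normRe_le_normc z : `|Re z| <= normc z.
Proof.
by rewrite normc_ReIm -sqrtr_sqr ler_sqrt ?addr_ge0 ?sqr_ge0 // lerDl sqr_ge0.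
Qed.

Lemma Re_le_normc z : Re z <= normc z.
Proof. exact: le_trans (ler_norm _) (normRe_le_normc z). Qed.

Lemma normc_real (r : R) : normc r%:C%C = `|r|.
Proof. by rewrite normc_ReIm /= expr0n addr0 sqrtr_sqr. Qed.

Lemma real_complexRe z : Im z = 0 -> z = (Re z)%:C%C.
Proof. by case: z => a b /= ->. Qed.

End ComplexNorm.

Lemma discriminant_le (R : realFieldType) (a b c : R) :
  0 <= c -> (forall t, 0 <= a - 2 * b * t + c * t ^+ 2) -> b ^+ 2 <= a * c.
Proof.
move=> c_ge0 quad_ge0; have [c_gt0|c_lt0|c0] := ltrgtP 0 c.
- have := mulr_ge0 (quad_ge0 (b / c)) (ltW c_gt0).
  have -> : (a - 2 * b * (b / c) + c * (b / c) ^+ 2) * c = a * c - b ^+ 2.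
    by field; rewrite gt_eqF.
  by rewrite subr_ge0.
- by move: c_ge0; rewrite leNgt c_lt0.
have -> : b = 0.
  apply/eqP/negPn/negP => b_neq0; have := quad_ge0 ((a + 1) / (2 * b)).
  rewrite -c0 mul0r addr0.
  have -> : 2 * b * ((a + 1) / (2 * b)) = a + 1 by field.
  lra.
by rewrite -c0 expr0n mulr0.
Qed.

Lemma bernoulli_le (R : realDomainType) (x : R) n :
  0 <= x -> 1 + n%:R * (x - 1) <= x ^+ n.
Proof.
move=> x_ge0; elim: n => [|n IHn]; first by rewrite mul0r addr0 expr0.
rewrite exprS; apply: le_trans (ler_wpM2l x_ge0 IHn); rewrite -natr1.
by have := mulr_ge0 (ler0n R n) (sqr_ge0 (x - 1)); nra.
Qed.

Lemma bounded_pow2_le1 (R : archiRealFieldType) (Q D : R) :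
  (forall n, Q ^+ (2 ^ n) <= D) -> Q <= 1.
Proof.
move=> powQ_le; rewrite leNgt; apply/negP => Q_gt1.
have Q1_gt0 : 0 < Q - 1 by rewrite subr_gt0.
have D_ge0 : 0 <= D.
  by apply: le_trans (powQ_le 0%N); rewrite expn0 expr1 (le_trans ler01) ?ltW.
have := archi_boundP (divr_ge0 D_ge0 (ltW Q1_gt0)).
set n := Num.Def.archi_bound _; rewrite ltr_pdivrMr // => Dn.
have n_le : n%:R <= (2 ^ n)%:R :> R by rewrite ler_nat ltnW // ltn_expl.
have := ler_wpM2r (ltW Q1_gt0) n_le.
have := bernoulli_le (2 ^ n) (ltW (lt_trans ltr01 Q_gt1)); have := powQ_le n.
lra.
Qed.

Lemma iter_le_pow (T : Type) (R : numDomainType) (f : T -> R) (B : T -> T) c x m :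
  0 <= c -> (forall y, f (B y) <= c * f y) -> f (iter m B x) <= c ^+ m * f x.
Proof.
move=> c_ge0 fB_le; elim: m => [|m IHm]; first by rewrite expr0 mul1r.
by rewrite iterS exprS -mulrA; apply: le_trans (fB_le _) (ler_wpM2l c_ge0 IHm).
Qed.

Lemma sqrtr_le (R : rcfType) (a b : R) : 0 <= b -> (Num.sqrt a <= b) = (a <= b ^+ 2).
Proof. by move=> b_ge0; rewrite -{1}(ger0_norm b_ge0) -sqrtr_sqr ler_sqrt ?sqr_ge0. Qed.

Lemma le_sqrtr (R : rcfType) (a b : R) :
  0 <= a -> 0 <= b -> (a <= Num.sqrt b) = (a ^+ 2 <= b).
Proof. by move=> a_ge0 b_ge0; rewrite -{1}(ger0_norm a_ge0) -sqrtr_sqr ler_sqrt. Qed.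

Lemma sqrt_sum_sqr_le (R : rcfType) (a b : R) :
  Num.sqrt (a ^+ 2 + b ^+ 2) <= `|a| + `|b|.
Proof.
rewrite sqrtr_le ?addr_ge0 // -[a ^+ 2]real_normK ?num_real //.
by rewrite -[b ^+ 2]real_normK ?num_real // sqrrD addrAC lerDl mulrn_wge0 ?mulr_ge0.
Qed.

Lemma le_sup_image (T : Type) (R : realType) (P : set T) (f : T -> R) (M : R) x :
  (forall y, P y -> f y <= M) -> P x -> f x <= sup [set f y | y in P].
Proof.
move=> f_le Px; apply: ub_le_sup; last by exists x.
by exists M => _ [y Py <-]; exact: f_le.
Qed.

Lemma sup_image_le (T : Type) (R : realType) (P : set T) (f : T -> R) (M : R) :
  (exists x, P x) -> (forall y, P y -> f y <= M) -> sup [set f y | y in P] <= M.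
Proof.
move=> [x Px] f_le; apply: ge_sup; first by exists (f x), x.
by move=> _ [y Py <-]; exact: f_le.
Qed.

Section LinearOperator.
Variables (R : pzRingType) (V : lmodType R) (B : V -> V).
Hypothesis B_lin : forall a x y, B (a *: x + y) = a *: B x + B y.

Lemma op0 : B 0 = 0.
Proof. by have := B_lin (-1) 0 0; rewrite !scaleN1r oppr0 addr0 addNr. Qed.

Lemma opD x y : B (x + y) = B x + B y.
Proof. by have := B_lin 1 x y; rewrite !scale1r. Qed.

Lemma opZ a x : B (a *: x) = a *: B x.
Proof. by rewrite -[a *: x]addr0 B_lin op0 addr0. Qed.

Lemma opB x y : B (x - y) = B x - B y.
Proof. by rewrite opD -scaleN1r opZ scaleN1r. Qed.

End LinearOperator.

Section LeftLinearForm.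
Variables (R : rcfType) (V : lmodType R[i]) (h : V -> V -> R[i]).
Hypothesis h_linl : forall a x y z, h (a *: x + y) z = a * h x z + h y z.

Lemma ip0l z : h 0 z = 0.
Proof. by have := h_linl 1 0 0 z; rewrite scale1r addr0 mul1r -{1}[h 0 z]addr0 => /addrI. Qed.

Lemma ipDl x y z : h (x + y) z = h x z + h y z.
Proof. by rewrite -[x]scale1r h_linl mul1r scale1r. Qed.

Lemma ipZl a x z : h (a *: x) z = a * h x z.
Proof. by rewrite -[a *: x]addr0 h_linl ip0l addr0. Qed.

Lemma ipNl x z : h (- x) z = - h x z.
Proof. by rewrite -scaleN1r ipZl mulN1r. Qed.

Lemma ipBl x y z : h (x - y) z = h x z - h y z.
Proof. by rewrite ipDl ipNl. Qed.

Hypothesis h_addr : forall z x y, h z (x + y) = h z x + h z y.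
Hypothesis h_scaler : forall z a x, h z (a *: x) = conjc a * h z x.
Hypothesis h_pos : forall x, 0 <= h x x.

(* The imaginary parts of [h (x + y) (x + y)] and [h ('i x + y) ('i x + y)]
   vanish; these two real equations say [h y x = conjc (h x y)]. *)
Lemma psd_form_hermitian x y : h y x = conjc (h x y).
Proof.
have e1 := ger0_Im (h_pos (x + y)).
have e2 := ger0_Im (h_pos ('i%C *: x + y)).
have ex := ger0_Im (h_pos x); have ey := ger0_Im (h_pos y).
rewrite !ipDl !h_addr in e1.
rewrite !ipDl !h_addr !ipZl !h_scaler in e2.
move: e1 e2 ex ey.
case: (h x x) (h y y) (h x y) (h y x) => [a1 a2] [b1 b2] [c1 c2] [d1 d2] /= e1 e2 ex ey.
by apply/eqP; rewrite eq_complex /=; apply/andP; split; apply/eqP; lra.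
Qed.

End LeftLinearForm.

Section HermitianForm.
Variables (R : realType) (V : lmodType R[i]) (h : V -> V -> R[i]).
Hypothesis h_linl : forall a x y z, h (a *: x + y) z = a * h x z + h y z.
Hypothesis h_herm : forall x y, h y x = conjc (h x y).
Hypothesis h_pos : forall x, 0 <= h x x.

Let ipDl := ipDl h_linl.
Let ipZl := ipZl h_linl.
Let ipBl := ipBl h_linl.

Lemma ipDr z x y : h z (x + y) = h z x + h z y.
Proof. by rewrite !(h_herm _ z) ipDl raddfD. Qed.

Lemma ipZr z a x : h z (a *: x) = conjc a * h z x.
Proof. by rewrite !(h_herm _ z) ipZl rmorphM. Qed.

Lemma ipNr z x : h z (- x) = - h z x.
Proof. by rewrite !(h_herm _ z) (ipNl h_linl) raddfN. Qed.

Lemma ipBr z x y : h z (x - y) = h z x - h z y.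
Proof. by rewrite ipDr ipNr. Qed.

Lemma vnorm_ge0 x : 0 <= vnorm h x.
Proof. exact: sqrtr_ge0. Qed.

Lemma Re_form_ge0 x : 0 <= Re (h x x).
Proof. by have := h_pos x; rewrite lecE => /andP[]. Qed.

Lemma sqr_vnorm x : vnorm h x ^+ 2 = Re (h x x).
Proof. by rewrite sqr_sqrtr // Re_form_ge0. Qed.

Lemma form_diag x : h x x = (vnorm h x ^+ 2)%:C%C.
Proof. by rewrite sqr_vnorm; apply: real_complexRe; apply: ger0_Im. Qed.

Lemma normc_form_le x y : normc (h x y) <= vnorm h x * vnorm h y.
Proof.
have quad_ge0 t : 0 <= vnorm h x ^+ 2 - 2 * normc (h x y) ^+ 2 * t
                      + normc (h x y) ^+ 2 * vnorm h y ^+ 2 * t ^+ 2.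
  have := Re_form_ge0 (x - (t%:C * h x y)%C *: y).
  rewrite ipBl !ipBr !ipZl !ipZr (h_herm x y) !form_diag sqr_normc_ReIm.
  by case: (h x y) => u v /=; congr (_ <= _); ring.
have := discriminant_le (mulr_ge0 (sqr_ge0 (normc (h x y))) (sqr_ge0 (vnorm h y))) quad_ge0.
have [c0|c_neq0] := eqVneq (normc (h x y)) 0.
  by rewrite c0 mulr_ge0 ?vnorm_ge0.
rewrite mulrCA expr2 ler_pM2l ?exprn_gt0 ?lt_def ?c_neq0 ?normc_ge0 // -exprMn.
by rewrite -ler_sqrt ?sqr_ge0 // !sqrtr_sqr !ger0_norm ?mulr_ge0 ?vnorm_ge0 ?normc_ge0.
Qed.

Lemma vnormZ (r : R) x : vnorm h (r%:C%C *: x) = `|r| * vnorm h x.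
Proof.
rewrite [LHS]/vnorm ipZl ipZr conjc_real form_diag /= !(mul0r, mulr0, subr0).
by rewrite mulrA -expr2 -exprMn sqrtr_sqr normrM (ger0_norm (vnorm_ge0 x)).
Qed.

Lemma vnorm_normalize x : vnorm h x != 0 -> vnorm h ((vnorm h x)^-1%:C%C *: x) = 1.
Proof. by move=> x_neq0; rewrite vnormZ ger0_norm ?invr_ge0 ?vnorm_ge0 // mulVf. Qed.

Lemma parallelogram x y :
  vnorm h (x + y) ^+ 2 + vnorm h (x - y) ^+ 2 = 2 * (vnorm h x ^+ 2 + vnorm h y ^+ 2).
Proof.
rewrite !sqr_vnorm ipDl ipBl !ipBr !ipDr.
by case: (h x x) (h x y) (h y x) (h y y) => ? ? [? ?] [? ?] [? ?] /=; ring.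
Qed.

Lemma sqr_vnorm_sym_le (C : V -> V) x : (forall x y, h (C x) y = h x (C y)) ->
  vnorm h (C x) ^+ 2 <= vnorm h x * vnorm h (C (C x)).
Proof.
move=> C_sym; rewrite sqr_vnorm C_sym; apply: le_trans (Re_le_normc _) _.
exact: normc_form_le.
Qed.

Section SymmetricOperator.
Variable B : V -> V.
Hypothesis B_sym : forall x y, h (B x) y = h x (B y).

Lemma form_sym_real x : h (B x) x = (Re (h (B x) x))%:C%C.
Proof.
apply: real_complexRe; have := h_herm x (B x); rewrite -B_sym.
case: (h (B x) x) => a b /= [] /eqP; rewrite -subr_eq0 opprK -mulr2n.
by rewrite mulrn_eq0 => /eqP.
Qed.

Lemma normc_form_sym x : normc (h (B x) x) = `|Re (h (B x) x)|.
Proof. by rewrite {1}form_sym_real normc_real. Qed.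

Lemma iter_sym n x y : h (iter n B x) y = h x (iter n B y).
Proof. by elim: n x y => [//|n IHn] x y; rewrite iterS B_sym IHn -iterSr. Qed.

Lemma vnorm_sym_pow2_le x n :
  vnorm h x = 1 -> vnorm h (B x) ^+ (2 ^ n) <= vnorm h (iter (2 ^ n) B x).
Proof.
move=> x1; elim: n => [|n IHn]; first by rewrite expn0 expr1.
rewrite expnS mulnC exprM.
apply: le_trans (lerXn2r 2 _ _ IHn) _; rewrite ?nnegrE ?exprn_ge0 ?vnorm_ge0 //.
have := sqr_vnorm_sym_le x (iter_sym (2 ^ n)); rewrite x1 mul1r.
by rewrite -iterD addnn -mul2n mulnC.
Qed.

Lemma vnorm_sym_le x (K D : R) : vnorm h x = 1 -> 0 < K ->
  (forall m, vnorm h (iter m B x) <= D * K ^+ m) -> vnorm h (B x) <= K.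
Proof.
move=> x1 K_gt0 growth; rewrite -[K in _ <= K]mul1r -ler_pdivrMr //.
apply: (@bounded_pow2_le1 _ _ D) => n; rewrite exprMn exprVn ler_pdivrMr ?exprn_gt0 //.
exact: le_trans (vnorm_sym_pow2_le n x1) (growth _).
Qed.

Hypothesis B_lin : forall a x y, B (a *: x + y) = a *: B x + B y.

Lemma polarization_sym x y :
  4 * Re (h (B x) y) = Re (h (B (x + y)) (x + y)) - Re (h (B (x - y)) (x - y)).
Proof.
rewrite (opD B_lin) (opB B_lin) ipDl ipBl !ipBr !ipDr (B_sym y x) (h_herm (B x) y).
by case: (h (B x) x) (h (B x) y) (h (B y) y) => ? ? [? ?] [? ?] /=; ring.
Qed.

Lemma normc_form_sym_le_sqr (w : R) :
    (forall u, vnorm h u = 1 -> normc (h (B u) u) <= w) ->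
  forall z, normc (h (B z) z) <= w * vnorm h z ^+ 2.
Proof.
move=> numrad_le z; have [z0|z_neq0] := eqVneq (vnorm h z) 0.
  by have := normc_form_le (B z) z; rewrite z0 expr0n /= !mulr0.
have z_gt0 : 0 < vnorm h z by rewrite lt_def z_neq0 vnorm_ge0.
have := numrad_le _ (vnorm_normalize z_neq0).
rewrite (opZ B_lin) ipZl ipZr conjc_real mulrA ComplexField.Normc.normcM -rmorphM.
rewrite normc_real ger0_norm ?mulr_ge0 ?invr_ge0 ?vnorm_ge0 //.
by rewrite -expr2 exprVn mulrC ler_pdivrMr ?exprn_gt0.
Qed.

(* Polarization with [y = B x / ||B x||] bounds [4 ||B x||] by
   [w (||x + y||^2 + ||x - y||^2) = 4 w]. *)
Lemma vnorm_sym_le_numrad (w : R) :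
    (forall u, vnorm h u = 1 -> normc (h (B u) u) <= w) ->
  forall x, vnorm h x = 1 -> vnorm h (B x) <= w.
Proof.
move=> numrad_le x x1; have w_ge0 : 0 <= w := le_trans (normc_ge0 _) (numrad_le x x1).
have [Bx0|Bx_neq0] := eqVneq (vnorm h (B x)) 0; first by rewrite Bx0.
set y := (vnorm h (B x))^-1%:C%C *: B x.
have y1 : vnorm h y = 1 := vnorm_normalize Bx_neq0.
have Re_Bxy : Re (h (B x) y) = vnorm h (B x).
  by rewrite ipZr conjc_real form_diag /= !(mul0r, subr0) expr2 mulKf.
have numrad_sqr_le z := le_trans (normRe_le_normc _) (normc_form_sym_le_sqr numrad_le z).
move: (numrad_sqr_le (x + y)) (numrad_sqr_le (x - y)); rewrite !ler_norml.
move=> /andP[_ le_plus] /andP[le_minus _].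
have := parallelogram x y; rewrite x1 y1 expr1n => par.
have : w * vnorm h (x + y) ^+ 2 + w * vnorm h (x - y) ^+ 2 = 4 * w.
  by rewrite -mulrDr par; ring.
have := polarization_sym x y; rewrite Re_Bxy; lra.
Qed.

End SymmetricOperator.

Section SymmetricPair.
Variables T S : V -> V.
Hypothesis T_sym : forall x y, h (T x) y = h x (T y).
Hypothesis S_sym : forall x y, h (S x) y = h x (S y).

(* Cauchy-Schwarz for [S x] and the reflection [2 <T x, x> x - T x] of [T x]. *)
Lemma buzano_sym x : vnorm h x = 1 ->
  2 * Re (h (T x) x) * Re (h (S x) x)
    <= normc (h (T x) (S x)) + vnorm h (T x) * vnorm h (S x).
Proof.
move=> x1; set t := Re (h (T x) x); set s := Re (h (S x) x).
set u := (2 * t)%:C%C *: x - T x.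
have u_norm : vnorm h u = vnorm h (T x).
  rewrite /vnorm ipBl !ipBr !ipZl !ipZr -T_sym (form_sym_real T_sym) -/t.
  rewrite (form_diag x) x1 conjc_real.
  by congr Num.sqrt; case: (h (T x) (T x)) => ? ? /=; ring.
have Re_u : Re (h u (S x)) = 2 * t * s - Re (h (T x) (S x)).
  rewrite ipBl ipZl -S_sym (form_sym_real S_sym) -/s.
  by case: (h (T x) (S x)) => ? ? /=; ring.
have := normc_form_le u (S x); rewrite u_norm.
have := Re_le_normc (h u (S x)); have := Re_le_normc (h (T x) (S x)); lra.
Qed.

Lemma normc_form_add x :
  normc (h (T x + S x) x) = `|Re (h (T x) x) + Re (h (S x) x)|.
Proof. by rewrite ipDl (form_sym_real T_sym) (form_sym_real S_sym) -rmorphD normc_real. Qed.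

Lemma normc_form_add_i x :
  normc (h (T x + 'i%C *: S x) x) = Num.sqrt (Re (h (T x) x) ^+ 2 + Re (h (S x) x) ^+ 2).
Proof.
rewrite ipDl ipZl (form_sym_real T_sym) (form_sym_real S_sym).
by rewrite normc_ReIm /=; congr Num.sqrt; ring.
Qed.

End SymmetricPair.
End HermitianForm.

Lemma bounded_op_ge1 (R : realType) (V : lmodType R[i]) (ip : V -> V -> R[i]) B :
  bounded_op ip B ->
  exists2 c, 1 <= c & forall x, vnorm ip (B x) <= c * vnorm ip x.
Proof.
case=> _ [c Bc]; exists (Num.max 1 c); first by rewrite le_max lexx.
move=> x; apply: le_trans (Bc x) (ler_wpM2r (sqrtr_ge0 _) _).
by rewrite le_max lexx orbT.
Qed.

Lemma normA_vnorm (R : realType) (V : lmodType R[i]) (ip : V -> V -> R[i]) A x :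
  normA ip A x = vnorm (ipA ip A) x.
Proof. by []. Qed.

Section WeightedForm.
Variables (R : realType) (V : lmodType R[i]) (ip : V -> V -> R[i]) (A : V -> V).
Hypothesis ip_linl : forall a x y z, ip (a *: x + y) z = a * ip x z + ip y z.
Hypothesis ip_herm : forall x y, ip y x = conjc (ip x y).
Hypothesis ip_pos : forall x, 0 <= ip x x.
Hypothesis A_lin : forall a x y, A (a *: x + y) = a *: A x + A y.
Hypothesis A_pos : forall x, 0 <= ip (A x) x.

Lemma ipA_linl a x y z : ipA ip A (a *: x + y) z = a * ipA ip A x z + ipA ip A y z.
Proof. by rewrite /ipA A_lin ip_linl. Qed.

Lemma ipA_herm x y : ipA ip A y x = conjc (ipA ip A x y).
Proof.
apply: (psd_form_hermitian ipA_linl) => [z u v|z a u|u]; rewrite /ipA.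
- exact: (ipDr ip_linl ip_herm).
- exact: (ipZr ip_linl ip_herm).
- exact: A_pos.
Qed.

Lemma ipA_sym B : A_selfadjoint ip A B -> forall x y, ipA ip A (B x) y = ipA ip A x (B y).
Proof. by move=> B_sa x y; rewrite [RHS]ipA_herm /ipA B_sa -ip_herm. Qed.

Lemma A_sphere_nonempty : (forall x, ip x x = 0 -> x = 0) -> nonzero_op A ->
  exists x, A_sphere ip A x.
Proof.
move=> ip_def [x0 Ax0_neq0].
have x0_neq0 : vnorm (ipA ip A) x0 != 0.
  apply/eqP => x0_0; apply/Ax0_neq0/ip_def/ComplexField.Normc.eq0_normc/eqP.
  rewrite eq_le normc_ge0 andbT.
  by have := normc_form_le ipA_linl ipA_herm A_pos x0 (A x0); rewrite x0_0 mul0r.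
by eexists; apply: (vnorm_normalize ipA_linl ipA_herm A_pos x0_neq0).
Qed.

Lemma vnormA_le c : 1 <= c -> (forall x, vnorm ip (A x) <= c * vnorm ip x) ->
  forall x, vnorm (ipA ip A) x <= c * vnorm ip x.
Proof.
move=> c_ge1 A_le x; have c_ge0 : 0 <= c := le_trans ler01 c_ge1.
rewrite -(@ler_pXn2r _ 2) ?nnegrE ?vnorm_ge0 ?mulr_ge0 ?vnorm_ge0 //.
rewrite (sqr_vnorm A_pos) exprMn; apply: le_trans (Re_le_normc _) _.
apply: le_trans (normc_form_le ip_linl ip_herm ip_pos _ _) _.
apply: le_trans (ler_wpM2r (vnorm_ge0 _ x) (A_le x)) _.
rewrite -mulrA -expr2 ler_wpM2r ?sqr_ge0 //.
by rewrite -[X in X <= _]mulr1 ler_wpM2l.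
Qed.

Hypothesis A_bounded : bounded_op ip A.

(* [||B^m x||_A <= cA c^m ||x||], which is all the power trick needs. *)
Lemma normA_selfadjoint_bounded B : bounded_op ip B -> A_selfadjoint ip A B ->
  exists c, forall x, A_sphere ip A x -> normA ip A (B x) <= c.
Proof.
move=> B_op B_sa; have [c c_ge1 B_le] := bounded_op_ge1 B_op.
have [cA cA_ge1 A_le] := bounded_op_ge1 A_bounded.
exists c => x x1; have c_gt0 := lt_le_trans ltr01 c_ge1.
apply: (vnorm_sym_le ipA_linl ipA_herm A_pos (ipA_sym B_sa) x1 c_gt0 (D := cA * vnorm ip x)) => m.
apply: le_trans (vnormA_le cA_ge1 A_le _) _; rewrite -mulrA ler_wpM2l ?(le_trans ler01) //.
by rewrite mulrC; apply: iter_le_pow; rewrite ?ltW.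
Qed.

End WeightedForm.

Section SelfadjointPair.
Variables (R : realType) (V : lmodType R[i]) (ip : V -> V -> R[i]) (A : V -> V).
Local Notation hA := (ipA ip A).
Hypothesis hA_linl : forall a x y z, hA (a *: x + y) z = a * hA x z + hA y z.
Hypothesis hA_herm : forall x y, hA y x = conjc (hA x y).
Hypothesis hA_pos : forall x, 0 <= hA x x.
Hypothesis sphere_nonempty : exists x, A_sphere ip A x.

Lemma normc_le_normA B x : A_sphere ip A x -> normc (hA (B x) x) <= normA ip A (B x).
Proof.
by move=> x1; have := normc_form_le hA_linl hA_herm hA_pos (B x) x; rewrite -!normA_vnorm x1 mulr1.
Qed.

Lemma le_numradA B M x : (forall y, A_sphere ip A y -> normc (hA (B y) y) <= M) ->
  A_sphere ip A x -> normc (hA (B x) x) <= numradA ip A B.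
Proof. exact: (le_sup_image (f := fun y => normc (hA (B y) y))). Qed.

Lemma numradA_le B M : (forall y, A_sphere ip A y -> normc (hA (B y) y) <= M) ->
  numradA ip A B <= M.
Proof. exact: (sup_image_le (f := fun y => normc (hA (B y) y))). Qed.

Lemma le_opnormA B M x : (forall y, A_sphere ip A y -> normA ip A (B y) <= M) ->
  A_sphere ip A x -> normA ip A (B x) <= opnormA ip A B.
Proof. exact: (le_sup_image (f := fun y => normA ip A (B y))). Qed.

Lemma opnormA_le B M : (forall y, A_sphere ip A y -> normA ip A (B y) <= M) ->
  opnormA ip A B <= M.
Proof. exact: (sup_image_le (f := fun y => normA ip A (B y))). Qed.

Section BoundedSymmetric.
Variable B : V -> V.
Hypothesis B_sym : forall x y, hA (B x) y = hA x (B y).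
Hypothesis B_bounded : exists c, forall x, A_sphere ip A x -> normA ip A (B x) <= c.

Lemma normA_le_opnormA x : A_sphere ip A x -> normA ip A (B x) <= opnormA ip A B.
Proof. by move=> x1; case: B_bounded => c B_le; exact: le_opnormA B_le x1. Qed.

Lemma opnormA_ge0 : 0 <= opnormA ip A B.
Proof.
by case: sphere_nonempty => x x1; apply: le_trans (sqrtr_ge0 _) (normA_le_opnormA x1).
Qed.

Lemma absRe_le_normA x : A_sphere ip A x -> `|Re (hA (B x) x)| <= normA ip A (B x).
Proof. by rewrite -(normc_form_sym hA_herm B_sym); exact: normc_le_normA. Qed.

Lemma absRe_le_numradA x : A_sphere ip A x -> `|Re (hA (B x) x)| <= numradA ip A B.
Proof.
rewrite -(normc_form_sym hA_herm B_sym); apply: (le_numradA (M := opnormA ip A B)).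
by move=> y y1; apply: le_trans (normc_le_normA B y1) (normA_le_opnormA y1).
Qed.

Lemma opnormA_le_numradA : (forall a x y, B (a *: x + y) = a *: B x + B y) ->
  opnormA ip A B <= numradA ip A B.
Proof.
move=> B_lin; apply: opnormA_le => y.
apply: (vnorm_sym_le_numrad hA_linl hA_herm hA_pos B_sym B_lin) => u u1.
by rewrite (normc_form_sym hA_herm B_sym); exact: absRe_le_numradA.
Qed.

End BoundedSymmetric.

Variables T S : V -> V.
Hypothesis T_sym : forall x y, hA (T x) y = hA x (T y).
Hypothesis S_sym : forall x y, hA (S x) y = hA x (S y).
Hypothesis T_bounded : exists c, forall x, A_sphere ip A x -> normA ip A (T x) <= c.
Hypothesis S_bounded : exists c, forall x, A_sphere ip A x -> normA ip A (S x) <= c.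

Local Notation t x := (Re (hA (T x) x)).
Local Notation s x := (Re (hA (S x) x)).
Local Notation W := (numradA ip A (op_add T (op_scale 'i%C S))).
Local Notation P := (numradA ip A (S \o T)).
Local Notation NT := (opnormA ip A T).
Local Notation NS := (opnormA ip A S).

Lemma le_numradA_add_i x : A_sphere ip A x -> Num.sqrt (t x ^+ 2 + s x ^+ 2) <= W.
Proof.
rewrite -(normc_form_add_i hA_linl hA_herm T_sym S_sym).
apply: (le_numradA (M := NT + NS)) => y y1.
rewrite (normc_form_add_i hA_linl hA_herm T_sym S_sym).
apply: le_trans (sqrt_sum_sqr_le _ _) (lerD _ _).
- exact: le_trans (absRe_le_normA T_sym y1) (normA_le_opnormA T_bounded y1).
- exact: le_trans (absRe_le_normA S_sym y1) (normA_le_opnormA S_bounded y1).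
Qed.

Lemma normc_comp_le_opnormA x : A_sphere ip A x -> normc (hA (S (T x)) x) <= NT * NS.
Proof.
move=> x1; rewrite S_sym; apply: le_trans (normc_form_le hA_linl hA_herm hA_pos _ _) _.
by rewrite -!normA_vnorm ler_pM ?sqrtr_ge0 ?normA_le_opnormA.
Qed.

Lemma normc_form_le_numradA_comp x : A_sphere ip A x -> normc (hA (T x) (S x)) <= P.
Proof. by rewrite -S_sym; apply: le_numradA normc_comp_le_opnormA. Qed.

Lemma numradA_add_le : numradA ip A (op_add T S) <= Num.sqrt (W ^+ 2 + P + NT * NS).
Proof.
apply: numradA_le => x x1.
have ts_le : 2 * t x * s x <= P + NT * NS.
  apply: le_trans (buzano_sym hA_linl hA_herm hA_pos T_sym S_sym x1) (lerD _ _).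
    exact: normc_form_le_numradA_comp.
  by rewrite -!normA_vnorm ler_pM ?sqrtr_ge0 ?normA_le_opnormA.
have W_ge0 : 0 <= W := le_trans (sqrtr_ge0 _) (le_numradA_add_i x1).
have P_ge0 : 0 <= P := le_trans (normc_ge0 _) (normc_form_le_numradA_comp x1).
have := le_numradA_add_i x1; rewrite sqrtr_le // => ts_sqr_le.
rewrite (normc_form_add hA_linl hA_herm T_sym S_sym) -sqrtr_sqr ler_sqrt; last first.
  by rewrite !addr_ge0 ?sqr_ge0 ?mulr_ge0 ?opnormA_ge0.
have -> : (t x + s x) ^+ 2 = t x ^+ 2 + s x ^+ 2 + 2 * t x * s x by ring.
lra.
Qed.

Lemma le_numradA_add :
    (forall a x y, T (a *: x + y) = a *: T x + T y) ->
    (forall a x y, S (a *: x + y) = a *: S x + S y) ->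
  Num.sqrt (W ^+ 2 + P + NT * NS) <= numradA ip A T + numradA ip A S.
Proof.
move=> T_lin S_lin; have [x0 x0_1] := sphere_nonempty.
have NT_le := opnormA_le_numradA T_sym T_bounded T_lin.
have NS_le := opnormA_le_numradA S_sym S_bounded S_lin.
have NT_ge0 := opnormA_ge0 T_bounded; have NS_ge0 := opnormA_ge0 S_bounded.
have WT_ge0 := le_trans NT_ge0 NT_le; have WS_ge0 := le_trans NS_ge0 NS_le.
have W_ge0 : 0 <= W := le_trans (sqrtr_ge0 _) (le_numradA_add_i x0_1).
have P_le : P <= NT * NS := numradA_le normc_comp_le_opnormA.
have W_le : W ^+ 2 <= numradA ip A T ^+ 2 + numradA ip A S ^+ 2.
  rewrite -le_sqrtr ?addr_ge0 ?sqr_ge0 //; apply: numradA_le => y y1.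
  rewrite (normc_form_add_i hA_linl hA_herm T_sym S_sym) ler_sqrt ?addr_ge0 ?sqr_ge0 //.
  rewrite -[t y ^+ 2]real_normK ?num_real // -[s y ^+ 2]real_normK ?num_real //.
  by apply: lerD; apply: lerXn2r;
    rewrite ?nnegrE ?normr_ge0 ?(absRe_le_numradA T_sym T_bounded) ?(absRe_le_numradA S_sym S_bounded).
have NN_le : NT * NS <= numradA ip A T * numradA ip A S by apply: ler_pM.
rewrite sqrtr_le ?addr_ge0 //.
have -> : (numradA ip A T + numradA ip A S) ^+ 2
  = numradA ip A T ^+ 2 + numradA ip A S ^+ 2 + 2 * (numradA ip A T * numradA ip A S) by ring.
lra.
Qed.

End SelfadjointPair.

Theorem theorem3p9 (R : realType) (V : lmodType R[i]) (ip : V -> V -> R[i])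
  (A T S : V -> V) :
  is_hilbert ip ->
  positive_op ip A -> nonzero_op A ->
  in_BA ip A T -> in_BA ip A S ->
  A_selfadjoint ip A T -> A_selfadjoint ip A S ->
  numradA ip A (op_add T S)
    <= Num.sqrt (numradA ip A (op_add T (op_scale 'i%C S)) ^+ 2
                 + numradA ip A (S \o T)
                 + opnormA ip A T * opnormA ip A S)
  /\
  Num.sqrt (numradA ip A (op_add T (op_scale 'i%C S)) ^+ 2
            + numradA ip A (S \o T)
            + opnormA ip A T * opnormA ip A S)
    <= numradA ip A T + numradA ip A S.
Proof.
move=> [ip_linl ip_herm ip_pos ip_def _] [A_op A_pos] A_neq0 [T_op _] [S_op _] T_sa S_sa.
have A_lin := A_op.1.
have hA_linl := ipA_linl ip_linl A_lin.
have hA_herm := ipA_herm ip_linl ip_herm A_lin A_pos.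
have sphere_nonempty := A_sphere_nonempty ip_linl ip_herm A_lin A_pos ip_def A_neq0.
have T_sym := ipA_sym ip_linl ip_herm A_lin A_pos T_sa.
have S_sym := ipA_sym ip_linl ip_herm A_lin A_pos S_sa.
have A_bounded := normA_selfadjoint_bounded ip_linl ip_herm ip_pos A_lin A_pos A_op.
have T_bounded := A_bounded _ T_op T_sa; have S_bounded := A_bounded _ S_op S_sa.
split.
- exact (numradA_add_le hA_linl hA_herm A_pos sphere_nonempty T_sym S_sym T_bounded S_bounded).
- exact (le_numradA_add hA_linl hA_herm A_pos sphere_nonempty T_sym S_sym T_bounded S_bounded
    T_op.1 S_op.1).
Qed.
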